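(* Let $K\subseteq\mathbb R^2$ be a compact set containing no array on three points. For each $l\in\mathbb N$ and each $\alpha>0$ there exists $n_0\in\mathbb N$ such that for all $n\ge n_0$ the following holds: if $u_0u_1\ldots u_k$ is a path in the graph $\Gamma^n$ such that $|p(u_0)-p(u_1)|\ge\alpha$ and $|q(u_{k-1})-q(u_k)|\ge\alpha$, then $k>l$.
   Context: An array on three points is a triple $a_1,a_2,a_3$ of points in the plane with $a_1\ne a_2$, $a_2\ne a_3$, such that the segments $[a_1;a_2]$ and $[a_2;a_3]$ are each parallel to a coordinate axis and are mutually orthogonal. Let $p,q:\mathbb R^2\to\mathbb R$ be $p(x,y)=x$, $q(x,y)=y$. For $n\in\mathbb N$ the graph $\Gamma^n$ is defined as follows: its vertex set $V(\Gamma^n)$ consists of all lattice points $(i/2^n,j/2^n)$, $i,j\in\mathbb Z$, such that the square $[i/2^n;(i+1)/2^n)\times[j/2^n;(j+1)/2^n)$ meets $K$; its edges are all two-element sets $\{u_1,u_2\}$ of vertices with $|p(u_1)-p(u_2)|\le 1/2^n$ or $|q(u_1)-q(u_2)|\le 1/2^n$. A path of length $k$ is a sequence $u_0,u_1,\dots,u_k$ of pairwise distinct vertices such that each two consecutive ones form an edge. *)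

From HB Require Import structures.
From mathcomp Require Import all_boot all_order all_algebra.
From mathcomp Require Import all_classical all_reals all_analysis.
Set Implicit Arguments. Unset Strict Implicit. Unset Printing Implicit Defensive.
Import Order.TTheory GRing.Theory Num.Theory.
Local Open Scope ring_scope.
Local Open Scope classical_set_scope.

Section Defs.
Variable R : realType.

Definition p (u : R * R) : R := u.1.
Definition q (u : R * R) : R := u.2.

Definition is_array (a1 a2 a3 : R * R) : Prop :=
  a1 <> a2 /\ a2 <> a3 /\
  ((q a1 = q a2 /\ p a2 = p a3) \/ (p a1 = p a2 /\ q a2 = q a3)).

Definition no_array (K : set (R * R)) : Prop :=
  forall a1 a2 a3, K a1 -> K a2 -> K a3 -> ~ is_array a1 a2 a3.

Definition mesh (n : nat) : R := (2%:R ^+ n)^-1.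

Definition vertex (K : set (R * R)) (n : nat) (u : R * R) : Prop :=
  exists i j : int,
    u = (i%:~R * mesh n, j%:~R * mesh n) /\
    exists x, K x /\
      i%:~R * mesh n <= p x < (i + 1)%:~R * mesh n /\
      j%:~R * mesh n <= q x < (j + 1)%:~R * mesh n.

Definition edge (K : set (R * R)) (n : nat) (u1 u2 : R * R) : Prop :=
  vertex K n u1 /\ vertex K n u2 /\ u1 <> u2 /\
  (`|p u1 - p u2| <= mesh n \/ `|q u1 - q u2| <= mesh n).

Definition is_path (K : set (R * R)) (n : nat) (u : nat -> R * R) (k : nat) : Prop :=
  (forall i, (i <= k)%N -> vertex K n (u i)) /\
  (forall i j, (i <= k)%N -> (j <= k)%N -> u i = u j -> i = j) /\
  (forall i, (i < k)%N -> edge K n (u i) (u i.+1)).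

End Defs.

From HB Require Import structures.
From mathcomp Require Import all_boot all_order all_algebra.
From mathcomp Require Import all_classical all_reals all_analysis.
From mathcomp Require Import lra.
Set Implicit Arguments. Unset Strict Implicit. Unset Printing Implicit Defensive.
Import Order.TTheory GRing.Theory Num.Theory.
Local Open Scope ring_scope.
Local Open Scope classical_set_scope.

(* Give every chain c_0, ..., c_k of points of K a defect: the sum over its steps
   of min(|dp|, |dq|), plus the amounts by which the horizontal gap of the first
   step and the vertical gap of the last step fall short of a. A chain of defect
   0 moves along axis-parallel segments, starts horizontally and ends vertically;
   without arrays a chain that starts horizontally can never turn, so the defect
   is positive. It is continuous on the compact set K^(k+1), hence bounded below
   by some e > 0, uniformly in k <= l. A path of length k in Gamma^n is shadowed
   within 2^-n by a chain of K whose defect is at most 3k 2^-n (taking a = alpha/2),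
   which is < e for large n. *)

Section AxisChains.
Variable R : realType.
Implicit Types (K : set (R * R)) (a b : R * R) (c : nat -> R * R).

Definition axis_aligned a b := p a = p b \/ q a = q b.

Lemma aligned_chain_stays_horizontal K k c : no_array K ->
  (forall i, (i <= k)%N -> K (c i)) ->
  (forall j, (j < k)%N -> axis_aligned (c j) (c j.+1)) ->
  p (c 0%N) <> p (c 1%N) ->
  forall j, (j <= k)%N -> q (c j) = q (c 0%N).
Proof.
move=> noK Kc al p01 [//|j].
(* Another point of K on the horizontal line through c_(i+1) turns any vertical
   step out of c_(i+1) into an array. *)
suff : forall i, (i < k)%N ->
    q (c i.+1) = q (c 0%N) /\ exists2 a, K a & a <> c i.+1 /\ q a = q (c i.+1).
  by move=> H /H [].
elim=> [|i IH] ltik.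
  have q01 : q (c 0%N) = q (c 1%N) by case: (al 0%N ltik).
  by split=> //; exists (c 0%N); [apply: Kc | split=> // e01; apply: p01; rewrite e01].
have [qi [a Ka [nai qa]]] := IH (ltnW ltik).
have q_step : q (c i.+1) = q (c i.+2).
  case: (al i.+1 ltik) => // pi.
  case: (eqVneq (c i.+1) (c i.+2)) => [-> //|ni].
  apply: False_ind; apply: (noK _ _ _ Ka (Kc _ (ltnW ltik)) (Kc _ ltik)).
  by split; [|split; [exact/eqP|left]].
split; first by rewrite -q_step.
case: (eqVneq (c i.+1) (c i.+2)) => [ei|ni].
- by exists a; rewrite // -ei.
- by exists (c i.+1); [apply: Kc; rewrite ltnW | split; [exact/eqP|]].
Qed.

End AxisChains.

Section Defect.
Variable R : realType.
Implicit Types (K : set (R * R)) (a b : R * R) (c : nat -> R * R).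

Definition axis_gap a b : R := Num.min `|p a - p b| `|q a - q b|.

Definition defect (k : nat) (alpha : R) c : R :=
  \sum_(j < k) axis_gap (c j) (c j.+1)
  + Num.max 0 (alpha - `|p (c 0%N) - p (c 1%N)|)
  + Num.max 0 (alpha - `|q (c k.-1) - q (c k)|).

Lemma axis_gap_ge0 a b : 0 <= axis_gap a b.
Proof. by rewrite le_min !normr_ge0. Qed.

Lemma axis_gap_eq0 a b : axis_gap a b = 0 -> axis_aligned a b.
Proof.
by rewrite /axis_gap minEle; case: ifP => _ /normr0_eq0/subr0_eq; [left|right].
Qed.

Lemma defect_ge0 k alpha c : 0 <= defect k alpha c.
Proof.
by rewrite !addr_ge0 ?sumr_ge0 ?le_max ?lexx // => j _; apply: axis_gap_ge0.
Qed.

Lemma eq_defect k alpha c c' : (0 < k)%N -> (forall j, (j <= k)%N -> c j = c' j) ->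
  defect k alpha c = defect k alpha c'.
Proof.
move=> k_gt0 ecc'; rewrite /defect !ecc' ?leq_pred //.
by congr (_ + _ + _); apply: eq_bigr => j _; rewrite !ecc' // ltnW.
Qed.

Lemma defect_gt0 K k alpha c : no_array K -> (0 < k)%N -> 0 < alpha ->
  (forall i, (i <= k)%N -> K (c i)) -> 0 < defect k alpha c.
Proof.
move=> noK k_gt0 alpha_gt0 Kc; rewrite lt_def defect_ge0 andbT.
apply/eqP; rewrite /defect => /eqP.
rewrite !paddr_eq0 ?addr_ge0 ?sumr_ge0 ?le_max ?lexx //; try by move=> j _; apply: axis_gap_ge0.
case/andP => /andP [/eqP gaps0 /eqP pos1] /eqP pos2.
have distinct (x y : R) : Num.max 0 (alpha - `|x - y|) = 0 -> x <> y.
  by move=> + exy; rewrite exy subrr normr0 subr0 maxEle (ltW alpha_gt0) => /eqP; rewrite gt_eqF.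
have aligned j : (j < k)%N -> axis_aligned (c j) (c j.+1).
  move=> ltjk; apply: axis_gap_eq0.
  have gap_ge0 (i : 'I_k) : true -> 0 <= axis_gap (c i) (c i.+1) by move=> _; exact: axis_gap_ge0.
  exact: (psumr_eq0P gap_ge0 gaps0 (i := Ordinal ltjk)).
have qc := aligned_chain_stays_horizontal noK Kc aligned (distinct _ _ pos1).
by apply: (distinct _ _ pos2); rewrite !qc ?leq_pred.
Qed.

End Defect.

Section Compactness.
Variable R : realType.

Lemma compact_pos_lbound (T : topologicalType) (f : T -> R^o) (A : set T) :
  compact A -> {within A, continuous f} -> (forall x, A x -> 0 < f x) ->
  exists2 e : R, 0 < e & forall x, A x -> e <= f x.
Proof.
move=> cA cf f_gt0.
have clfA : closed (f @` A).
  by apply: compact_closed; [exact: norm_hausdorff | exact: continuous_compact].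
have : nbhs (0 : R^o) (~` (f @` A)).
  apply: open_nbhs_nbhs; split; first exact: closed_openC.
  by move=> [x Ax fx0]; move: (f_gt0 x Ax); rewrite fx0 ltxx.
move=> /nbhs_ballP [e e_gt0 ball_fA]; exists e => // x Ax.
rewrite leNgt; apply/negP => fx_lt_e; apply: (ball_fA (f x)); last by exists x.
by rewrite -ball_normE /= sub0r normrN gtr0_norm ?f_gt0.
Qed.

Import ArrowAsProduct.

(* Chains of k+1 points are functions on 'I_k.+1, so that they carry the product
   topology (and Tychonoff applies); [inord] reads them as sequences. *)
Local Notation chain k := ('I_k.+1 -> R^o * R^o).

Lemma defect_chain_continuous k alpha :
  continuous (fun c : chain k => defect k alpha (fun j => c (inord j)) : R^o).
Proof.
have coord j (f : R^o * R^o -> R^o) : continuous f ->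
    continuous (fun c : chain k => f (c (inord j))).
  move=> cf c; apply: continuous_comp; last exact: cf.
  exact: (@proj_continuous _ (fun=> (R^o * R^o)%type)).
have dist i j (f : R^o * R^o -> R^o) : continuous f -> continuous
    (fun c : chain k => `|f (c (inord i)) - f (c (inord j))| : R^o).
  move=> cf c; apply: (@continuous_comp _ _ _
    (fun c => f (c (inord i)) - f (c (inord j))) (Num.norm : R^o -> R^o)).
    exact: continuousB (coord i f cf c) (coord j f cf c).
  exact: norm_continuous.
have [cp cq] : continuous (@p R : R^o * R^o -> R^o) /\ continuous (@q R : R^o * R^o -> R^o).
  by split=> x; [exact: cvg_fst | exact: cvg_snd].
have gaps : continuous (fun c : chain k =>
    \sum_(j < k) axis_gap (c (inord j)) (c (inord j.+1)) : R^o).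
  apply: continuous_big => [|j _ c]; first exact: add_continuous.
  exact: continuous_min (dist _ _ _ cp c) (dist _ _ _ cq c).
have excess i j (f : R^o * R^o -> R^o) : continuous f -> continuous
    (fun c : chain k => Num.max 0 (alpha - `|f (c (inord i)) - f (c (inord j))|) : R^o).
  move=> cf c; exact: continuous_max (@cst_continuous _ _ (0 : R^o) c)
    (continuousB (@cst_continuous _ _ (alpha : R^o) c) (dist i j f cf c)).
by move=> c; apply: continuousD (continuousD (gaps c) (excess _ _ _ cp c)) (excess _ _ _ cq c).
Qed.

Lemma defect_lbound (K : set (R^o * R^o)) k alpha :
  compact K -> no_array K -> (0 < k)%N -> 0 < alpha ->
  exists2 e : R, 0 < e & forall c : nat -> R * R,
    (forall i, (i <= k)%N -> K (c i)) -> e <= defect k alpha c.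
Proof.
move=> cK noK k_gt0 alpha_gt0.
pose chains := [set c : chain k | forall i, K (c i)].
have chains_compact : compact chains.
  exact: (@tychonoff _ (fun=> (R^o * R^o)%type) (fun=> K)).
have defect_cont := @defect_chain_continuous k alpha.
have defect_pos c : chains c -> 0 < defect k alpha (fun j => c (inord j)).
  by move=> Kc; apply: (defect_gt0 noK) => // i _; exact: Kc.
have [e e_gt0 He] := compact_pos_lbound chains_compact
  (continuous_subspaceT defect_cont) defect_pos.
exists e => // c Kc.
rewrite (@eq_defect _ _ _ c (fun j => (fun i : 'I_k.+1 => c i) (inord j))) //.
  by apply: (He (fun i : 'I_k.+1 => c i)) => i; apply: Kc; rewrite -ltnS.
by move=> j ljk; rewrite /= inordK.
Qed.

Lemma defect_uniform_lbound (K : set (R^o * R^o)) l alpha :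
  compact K -> no_array K -> 0 < alpha ->
  exists2 e : R, 0 < e & forall k (c : nat -> R * R), (0 < k <= l)%N ->
    (forall i, (i <= k)%N -> K (c i)) -> e <= defect k alpha c.
Proof.
move=> cK noK alpha_gt0; elim: l => [|l [e1 e1_gt0 He1]].
  by exists 1 => // k c /andP [k_gt0 /(leq_trans k_gt0)].
have [e2 e2_gt0 He2] := defect_lbound cK noK (ltn0Sn l) alpha_gt0.
exists (Num.min e1 e2) => [|k c /andP [k_gt0]]; first by rewrite lt_min e1_gt0 e2_gt0.
rewrite leq_eqVlt => /orP [/eqP -> | ltkl] Kc; rewrite ge_min.
- by rewrite He2 ?orbT.
- by rewrite He1 ?k_gt0.
Qed.

End Compactness.

Section Grid.
Variable R : realType.

Lemma mesh_gt0 n : 0 < mesh R n.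
Proof. by rewrite /mesh invr_gt0 exprn_gt0. Qed.

Lemma mesh_eventually_lt (d : R) : 0 < d ->
  exists n0, forall n, (n0 <= n)%N -> mesh R n < d.
Proof.
move=> d_gt0; exists (Num.truncn d^-1).+1 => n le_n0n.
have lt_inv_n : d^-1 < n%:R by rewrite -truncn_lt_nat ?invr_ge0 ?ltW.
have lt_n_pow2 : (n%:R : R) < 2%:R ^+ n by rewrite -natrX ltr_nat ltn_expl.
rewrite /mesh -(invrK d) ltf_pV2 ?posrE ?exprn_gt0 ?invr_gt0 //.
exact: lt_trans lt_inv_n lt_n_pow2.
Qed.

Lemma vertex_shadow (K : set (R * R)) n u : vertex K n u ->
  exists2 x, K x & `|p u - p x| <= mesh R n /\ `|q u - q x| <= mesh R n.
Proof.
move=> [i [j [-> [x [Kx [/andP [px1 px2] /andP [qx1 qx2]]]]]]].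
exists x => //; rewrite /p /q /= in px1 px2 qx1 qx2 *.
rewrite !intrD !mulrDl !mul1r in px2 qx2.
by split; rewrite distrC ger0_norm ?subr_ge0 // lerBlDl ltW.
Qed.

Lemma path_shadow (K : set (R * R)) n u k : is_path K n u k ->
  exists c : nat -> R * R, forall i, (i <= k)%N ->
    K (c i) /\ `|p (u i) - p (c i)| <= mesh R n /\ `|q (u i) - q (c i)| <= mesh R n.
Proof.
move=> [vert _].
have /choice [c Hc] : forall i, exists x : R * R, (i <= k)%N ->
    K x /\ `|p (u i) - p x| <= mesh R n /\ `|q (u i) - q x| <= mesh R n.
  move=> i; case: (leqP i k) => [/vert/vertex_shadow [x Kx [px qx]] | ltki].
  - by exists x.
  - by exists (u i).
by exists c.
Qed.

Lemma path_step_short (K : set (R * R)) n u k j : is_path K n u k -> (j < k)%N ->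
  `|p (u j) - p (u j.+1)| <= mesh R n \/ `|q (u j) - q (u j.+1)| <= mesh R n.
Proof. by move=> [_ [_ edges]] /edges [_ [_ []]]. Qed.

Lemma ler_dist_perturb (x y x' y' m : R) :
  `|x - x'| <= m -> `|y - y'| <= m -> `|x' - y'| <= `|x - y| + 2 * m.
Proof.
rewrite distrC => xx' yy'.
have := ler_distD x x' y'; have := ler_distD y x y'; lra.
Qed.

Lemma defect_shadow_le (u c : nat -> R * R) k alpha m : (0 < k)%N ->
  (forall i, (i <= k)%N -> `|p (u i) - p (c i)| <= m /\ `|q (u i) - q (c i)| <= m) ->
  (forall j, (j < k)%N -> `|p (u j) - p (u j.+1)| <= m \/ `|q (u j) - q (u j.+1)| <= m) ->
  alpha <= `|p (u 0%N) - p (u 1%N)| -> alpha <= `|q (u k.-1) - q (u k)| ->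
  4 * m <= alpha -> defect k (alpha / 2) c <= 3 * m * k%:R.
Proof.
move=> k_gt0 near steps gap0 gapk m_small.
have end_gap (x y x' y' : R) : `|x - x'| <= m -> `|y - y'| <= m -> alpha <= `|x - y| ->
    Num.max 0 (alpha / 2 - `|x' - y'|) = 0.
  rewrite (distrC x) (distrC y) => xx' yy' gap; apply/max_idPl.
  have := ler_dist_perturb xx' yy'; lra.
rewrite /defect (end_gap _ _ _ _ (near 0%N isT).1 (near 1%N k_gt0).1 gap0).
rewrite (end_gap _ _ _ _ (near k.-1 (leq_pred k)).2 (near k (leqnn k)).2 gapk) !addr0.
rewrite mulr_natr -[in X in _ <= X](card_ord k) -sumr_const; apply: ler_sum => j _.
have [[pj qj] [pj1 qj1]] := (near j (ltnW (ltn_ord j)), near j.+1 (ltn_ord j)).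
rewrite ge_min; case: (steps j (ltn_ord j)) => step; apply/orP; [left|right].
- by have := ler_dist_perturb pj pj1; lra.
- by have := ler_dist_perturb qj qj1; lra.
Qed.
End Grid.

Theorem mainTheorem2 (R : realType) (K : set (R^o * R^o)) :
  compact K -> no_array K ->
  forall (l : nat) (alpha : R), 0 < alpha ->
  exists n0 : nat, forall n : nat, (n0 <= n)%N ->
    forall (u : nat -> R * R) (k : nat),
      (0 < k)%N ->
      is_path K n u k ->
      alpha <= `|p (u 0%N) - p (u 1%N)| ->
      alpha <= `|q (u k.-1) - q (u k)| ->
      (l < k)%N.
Proof.
move=> cK noK l alpha alpha_gt0.
have [e e_gt0 He] := defect_uniform_lbound l cK noK (divr_gt0 alpha_gt0 (ltr0n _ 2)).
pose d := Num.min (e / (3 * l.+1)%:R) (alpha / 4).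
have d_gt0 : 0 < d by rewrite lt_min !divr_gt0 ?ltr0n ?muln_gt0.
have [n0 mesh_lt_d] := mesh_eventually_lt d_gt0.
exists n0 => n le_n0n u k k_gt0 path_u gap0 gapk; rewrite ltnNge; apply/negP => le_kl.
have [c shadow] := path_shadow path_u.
have k_range : (0 < k <= l)%N by rewrite k_gt0.
have e_le := He k c k_range (fun i le_ik => proj1 (shadow i le_ik)).
have mesh_le := defect_shadow_le k_gt0 (fun i le_ik => proj2 (shadow i le_ik))
  (fun j => path_step_short path_u) gap0 gapk.
have mesh_d := mesh_lt_d n le_n0n; have mesh_pos := mesh_gt0 R n.
have mesh_alpha : 4 * mesh R n <= alpha.
  have : d <= alpha / 4 by rewrite ge_min lexx orbT.
  lra.
have mesh_e : mesh R n * (3 * l.+1)%:R < e.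
  by rewrite -ltr_pdivlMr ?ltr0n ?muln_gt0 //; apply: lt_le_trans mesh_d _; rewrite ge_min lexx.
have := mesh_le mesh_alpha; move: mesh_e; rewrite natrM.
have : (k%:R : R) <= l.+1%:R by rewrite ler_nat ltnW.
nra.
Qed.
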